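(* Suppose $F$ satisfies Assumption A1, $F\in MDA(\Lambda)$ (i.e. $\xi=0$), Assumption A3, and $x_F<\infty$. Let $Y=1/(x_F-X)$ with distribution function $F_Y$, $\bar F_Y=1-F_Y$, and density $f_Y$. Then there exists $z_Y<\infty$ such that on $(z_Y,\infty)$, $F_Y$ is twice differentiable and $f_Y$ is positive, decreasing and convex. Moreover, $F_Y\in MDA(\Lambda)$ with infinite right endpoint, and $$\lim_{x\to\infty}\frac{\bar F_Y(x)f_Y'(x)}{f_Y(x)^2}=-1.$$
   Context: $X$ is a continuous random variable with distribution function $F$, density $f$, $\bar F=1-F$, and right endpoint $x_F=\sup\{x:F(x)<1\}$. For $\xi\in\mathbb{R}$, $H_\xi(x)=\exp\{-(1+\xi x)^{-1/\xi}\}$ if $\xi\ne0$ and $H_0(x)=\Lambda(x)=\exp\{-e^{-x}\}$, for $1+\xi x>0$. $F\in MDA(H_\xi)$ means there exist $c_n>0$, $d_n\in\mathbb{R}$ with $c_n^{-1}(M_n-d_n)$ converging in distribution to $H_\xi$, $M_n$ the maximum of $n$ i.i.d. copies of $X$. Assumption A1: there exists $z<x_F$ such that on $(z,x_F)$, $F$ is twice differentiable and $f$ is positive, decreasing and convex. Assumption A3: $\lim_{x\uparrow x_F}\bar F(x)f'(x)/f(x)^2=-1$. *)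

From HB Require Import structures.
From mathcomp Require Import all_boot all_order all_algebra.
From mathcomp Require Import all_classical all_reals all_analysis.
Set Implicit Arguments. Unset Strict Implicit. Unset Printing Implicit Defensive.
Import Order.TTheory GRing.Theory Num.Theory.
Import numFieldNormedType.Exports.
Local Open Scope classical_set_scope.
Local Open Scope ring_scope.

Definition distF d (T : measurableType d) (R : realType) (P : probability T R)
  (X : {RV P >-> R}) (x : R) : R := fine (cdf X x).

Definition has_density d (T : measurableType d) (R : realType)
  (P : probability T R) (X : {RV P >-> R}) : Prop :=
  exists f : R -> R, (forall x, 0 <= f x) /\ measurable_fun setT f /\
    forall r, cdf X r = (\int[lebesgue_measure]_(t in `]-oo, r]) (f t)%:E)%E.

(* Right endpoint x_F = sup {x : F x < 1}; finiteness = this set is bounded above. *)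
Definition endpoint_set (R : realType) (F : R -> R) : set R := [set x | F x < 1].

(* "decreasing" on an interval, read as non-increasing. *)
Definition decreasing_on (R : realType) (I : set R) (g : R -> R) : Prop :=
  forall x y, I x -> I y -> x <= y -> g y <= g x.

Definition convex_on (R : realType) (I : set R) (g : R -> R) : Prop :=
  forall x y t, I x -> I y -> 0 <= t <= 1 ->
    g (t * x + (1 - t) * y) <= t * g x + (1 - t) * g y.

Definition tail_regular (R : realType) (I : set R) (F : R -> R) : Prop :=
  (forall x, I x -> derivable F x 1 /\ derivable (derive1 F) x 1) /\
  (forall x, I x -> 0 < (derive1 F) x) /\
  decreasing_on I (derive1 F) /\ convex_on I (derive1 F).

Definition Gumbel (R : realType) (x : R) : R := expR (- expR (- x)).

(* F in MDA(Lambda): there exist c_n > 0, d_n with c_n^{-1}(M_n - d_n) => Lambda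
   in distribution, where M_n is the maximum of n i.i.d. copies, whose
   distribution function is F^n; Lambda being continuous, convergence in
   distribution means pointwise convergence of distribution functions. *)
Definition MDA_Gumbel (R : realType) (F : R -> R) : Prop :=
  exists c d : nat -> R, (forall n, 0 < c n) /\
    forall x : R, (fun n => F (c n * x + d n) ^+ n) @ \oo --> Gumbel x.

From HB Require Import structures.
From mathcomp Require Import all_boot all_order all_algebra.
From mathcomp Require Import all_classical all_reals all_analysis.
From mathcomp Require Import ring lra.
Import Order.TTheory GRing.Theory Num.Theory.
Import numFieldNormedType.Exports.
Local Open Scope classical_set_scope.
Local Open Scope ring_scope.
Set Implicit Arguments. Unset Strict Implicit. Unset Printing Implicit Defensive.

(* Write a := (1 - F) / f.  Assumption A3 says a' -> 0 at x_F, and this forces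
   a(x) = o(x_F - x): otherwise a stays above some c > 0 on [x, x_F), so that
   (1 - F t) e^(t/c) is nondecreasing there, contradicting F(t) -> 1.  As
   F_Y(y) = F(x_F - 1/y), two differentiations give, with x = x_F - 1/y,
     (1 - F_Y) f_Y' / f_Y^2 (y) = (1 - F) f' / f^2 (x) - 2 a(x) / (x_F - x),
   whence A3 for F_Y.  The density f_Y(y) = f(x_F - 1/y) / y^2 is a product of
   nonnegative, decreasing, convex functions, since f is decreasing and convex
   and y |-> x_F - 1/y is increasing and concave.  Finally, with
   d'_n = 1/(x_F - d_n), c'_n = c_n/(x_F - d_n)^2 and r_n = c_n/(x_F - d_n) -> 0,
   F_Y(c'_n x + d'_n) = F(c_n x/(1 + r_n x) + d_n), and the Gumbel limit of
   F^n(c_n x + d_n) is locally uniform in x. *)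

Lemma cvg_at_left_dist_lt (R : realType) (g : R -> R) (a l : R) :
  g x @[x --> a^'-] --> l -> forall e, 0 < e ->
  exists2 d, 0 < d & forall x, a - d < x < a -> `|g x - l| < e.
Proof.
move=> /cvgrPdist_lt gl e e0; have := gl e e0.
rewrite near_withinE => /nbhs_ballP[d /= d0 gd].
exists d => // x /andP[dx xa]; rewrite distrC; apply: gd => //.
by rewrite /ball /= ltr_distlC; apply/andP; split; lra.
Qed.

Lemma cvg_pinfty_dist_lt (R : realType) (h : R -> R) (l : R) :
  (forall e, 0 < e -> exists M, forall y, M < y -> `|h y - l| < e) ->
  h y @[y --> +oo] --> l.
Proof.
move=> hl; apply/cvgrPdist_lt => e e0; have [M hM] := hl e e0.
by exists M; split=> [|y My]; [exact: num_real | rewrite distrC; exact: hM].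
Qed.

Lemma cvgn_distP (R : realType) (u : nat -> R) (l : R) :
  u n @[n --> \oo] --> l <->
  (forall e, 0 < e -> exists N, forall n, (N <= n)%N -> `|u n - l| < e).
Proof.
split=> [/cvgrPdist_lt ul e e0 | ul].
  by have [N _ uN] := ul e e0; exists N => n Nn; rewrite distrC; exact: uN.
apply/cvgrPdist_lt => e e0; have [N uN] := ul e e0.
by exists N => // n Nn; rewrite distrC; exact: uN.
Qed.

Lemma MVT_cc (R : realType) (h dh : R -> R) (a b : R) : a <= b ->
  (forall y, a <= y <= b -> is_derive y 1 h (dh y)) ->
  exists2 c, a <= c <= b & h b - h a = dh c * (b - a).
Proof.
move=> ab hd.
have hd_in : forall y, y \in `]a, b[%R -> is_derive y 1 h (dh y).
  by move=> y; rewrite in_itv /= => /andP[ay yb]; apply: hd; rewrite !ltW.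
have h_cont : {within `[a, b], continuous h}.
  apply: continuous_in_subspaceT => y; rewrite inE /= in_itv /= => yab.
  have [d _] := hd y yab; exact/differentiable_continuous/derivable1_diffP.
have [c cab ->] := MVT_segment ab hd_in h_cont.
by exists c => //; move: cab; rewrite in_itv.
Qed.

Lemma MVT_lower_bound (R : realType) (h dh : R -> R) (a b m : R) : a <= b ->
  (forall y, a <= y <= b -> is_derive y 1 h (dh y)) ->
  (forall y, a <= y <= b -> - m <= dh y) -> h a - m * (b - a) <= h b.
Proof.
move=> ab hd dh_ge; have [c cab hE] := MVT_cc ab hd.
have ba : 0 <= b - a by rewrite subr_ge0.
have := ler_wpM2r ba (dh_ge c cab); rewrite mulNr; lra.
Qed.

Lemma is_derive_survival (R : realType) (F : R -> R) (f x : R) :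
  is_derive x 1 F f -> is_derive x 1 (fun t => 1 - F t) (- f).
Proof.
by move=> dF; have := @is_deriveB R R R (cst 1) F x 1 0 f _ dF; rewrite sub0r; exact.
Qed.

Definition hazard_inv (R : realType) (F f : R -> R) (x : R) := (1 - F x) / f x.

Lemma is_derive_hazard_inv (R : realType) (F f f' : R -> R) (x : R) :
  is_derive x 1 F (f x) -> is_derive x 1 f (f' x) -> f x != 0 ->
  is_derive x 1 (hazard_inv F f) (- 1 - (1 - F x) * f' x / f x ^+ 2).
Proof.
move=> dF df fx0; rewrite /hazard_inv.
have := is_deriveM (is_derive_survival dF) (is_deriveV fx0 df).
move=> /is_derive_eq; apply.
by rewrite /GRing.scale /=; field.
Qed.

Lemma is_derive_survival_expR (R : realType) (F : R -> R) (f k x : R) :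
  is_derive x 1 F f ->
  is_derive x 1 (fun t => (1 - F t) * expR (k * t))
     (expR (k * x) * ((1 - F x) * k - f)).
Proof.
move=> dF.
have dk : is_derive x 1 (fun t => k * t) k.
  by have := is_deriveZ k (is_derive_id x 1); rewrite /GRing.scale /= mulr1.
have dexp : is_derive x 1 (expR \o (fun t => k * t)) (expR (k * x) * k).
  exact: is_derive1_comp.
have := is_deriveM (is_derive_survival dF) dexp.
move=> /is_derive_eq; apply.
by rewrite /GRing.scale /=; ring.
Qed.

Section ConvexOn.
Variable R : realType.
Implicit Types (I J : set R) (f g : R -> R).

Lemma is_interval_conv I x y t : is_interval I -> I x -> I y -> 0 <= t <= 1 ->
  I (t * x + (1 - t) * y).
Proof.
move=> iI Ix Iy /andP[t0 t1].
have [xy|yx] := leP x y; [apply: (iI x y) | apply: (iI y x)] => //;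
  apply/andP; split; nra.
Qed.

Lemma decreasing_on_comp I J f g : (forall x, I x -> J (g x)) ->
  (forall x y, I x -> I y -> x <= y -> g x <= g y) ->
  decreasing_on J f -> decreasing_on I (f \o g).
Proof. by move=> IJ g_ndecr f_decr x y Ix Iy xy; apply: f_decr; auto. Qed.

Lemma decreasing_on_mul I f g : (forall x, I x -> 0 <= f x) ->
  (forall x, I x -> 0 <= g x) -> decreasing_on I f -> decreasing_on I g ->
  decreasing_on I (f \* g).
Proof.
by move=> f0 g0 f_decr g_decr x y Ix Iy xy; apply: ler_pM; auto.
Qed.

Lemma convex_on_comp I J f g : is_interval J -> (forall x, I x -> J (g x)) ->
  (forall x y t, I x -> I y -> 0 <= t <= 1 ->
    t * g x + (1 - t) * g y <= g (t * x + (1 - t) * y)) ->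
  (forall x y t, I x -> I y -> 0 <= t <= 1 -> I (t * x + (1 - t) * y)) ->
  decreasing_on J f -> convex_on J f -> convex_on I (f \o g).
Proof.
move=> iJ IJ g_concave iI f_decr f_conv x y t Ix Iy t01 /=.
apply: le_trans (f_conv _ _ _ (IJ _ Ix) (IJ _ Iy) t01).
apply: f_decr; first exact: is_interval_conv iJ (IJ _ Ix) (IJ _ Iy) t01.
  exact/IJ/iI.
exact: g_concave.
Qed.

Lemma convex_on_mul I f g : is_interval I ->
  (forall x, I x -> 0 <= f x) -> (forall x, I x -> 0 <= g x) ->
  decreasing_on I f -> decreasing_on I g ->
  convex_on I f -> convex_on I g -> convex_on I (f \* g).
Proof.
move=> iI f0 g0 f_decr g_decr f_conv g_conv x y t Ix Iy t01 /=.
have Iw := is_interval_conv iI Ix Iy t01.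
have comono : 0 <= (f x - f y) * (g x - g y).
  have [xy|/ltW yx] := leP x y.
    by rewrite mulr_ge0 // subr_ge0; [apply: f_decr | apply: g_decr].
  by rewrite -mulrNN !opprB mulr_ge0 // subr_ge0; [apply: f_decr | apply: g_decr].
apply: le_trans (ler_pM (f0 _ Iw) (g0 _ Iw) (f_conv _ _ _ Ix Iy t01)
  (g_conv _ _ _ Ix Iy t01)) _.
case/andP: t01 => t0 t1; rewrite -subr_ge0.
have -> : t * (f x * g x) + (1 - t) * (f y * g y)
    - (t * f x + (1 - t) * f y) * (t * g x + (1 - t) * g y)
   = t * (1 - t) * ((f x - f y) * (g x - g y)) by ring.
by apply: mulr_ge0 => //; apply: mulr_ge0; rewrite // subr_ge0.
Qed.

Lemma conv_gt0 (x y t : R) : 0 < x -> 0 < y -> 0 <= t <= 1 ->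
  0 < t * x + (1 - t) * y.
Proof.
move=> x0 y0 /andP[t0 t1].
have [->|tn0] := eqVneq t 0; first by rewrite mul0r add0r subr0 mul1r.
apply: ltr_pwDl; first by rewrite mulr_gt0 // lt_def tn0.
by rewrite mulr_ge0 ?subr_ge0 // ltW.
Qed.

Lemma inv_convex (x y t : R) : 0 < x -> 0 < y -> 0 <= t <= 1 ->
  (t * x + (1 - t) * y)^-1 <= t * x^-1 + (1 - t) * y^-1.
Proof.
move=> x0 y0 t01; have /andP[t0 t1] := t01.
have w0 := conv_gt0 x0 y0 t01.
rewrite -subr_ge0.
have -> : t * x^-1 + (1 - t) * y^-1 - (t * x + (1 - t) * y)^-1 =
   t * (1 - t) * (x - y) ^+ 2 / (x * y * (t * x + (1 - t) * y)).
  by field; rewrite !gt_eqF.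
apply: divr_ge0; last by rewrite ltW // !mulr_gt0.
by rewrite mulr_ge0 ?sqr_ge0 // mulr_ge0 ?subr_ge0.
Qed.

Lemma inv_sqr_convex (x y t : R) : 0 < x -> 0 < y -> 0 <= t <= 1 ->
  ((t * x + (1 - t) * y)^-1) ^+ 2 <= t * x^-1 ^+ 2 + (1 - t) * y^-1 ^+ 2.
Proof.
move=> x0 y0 t01; have /andP[t0 t1] := t01.
have w0 := conv_gt0 x0 y0 t01.
apply: (@le_trans _ _ ((t * x^-1 + (1 - t) * y^-1) ^+ 2)).
  rewrite ler_sqr ?nnegrE; first exact: inv_convex.
    by rewrite invr_ge0 ltW.
  by rewrite addr_ge0 // mulr_ge0 ?subr_ge0 // invr_ge0 ltW.
rewrite -subr_ge0.
have -> : t * x^-1 ^+ 2 + (1 - t) * y^-1 ^+ 2 - (t * x^-1 + (1 - t) * y^-1) ^+ 2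
   = t * (1 - t) * (x^-1 - y^-1) ^+ 2 by ring.
by rewrite mulr_ge0 ?sqr_ge0 // mulr_ge0 ?subr_ge0.
Qed.

Lemma inv_sqr_le (x y : R) : 0 < x -> x <= y -> y^-1 ^+ 2 <= x^-1 ^+ 2.
Proof.
move=> x0 xy; have y0 := lt_le_trans x0 xy.
rewrite ler_sqr ?nnegrE ?invr_ge0 ?(ltW x0) ?(ltW y0) //.
by rewrite lef_pV2 ?posrE.
Qed.

End ConvexOn.

Section RegularTail.
Variables (R : realType) (F : R -> R) (z xF : R).
Hypothesis F_reg : tail_regular `]z, xF[ F.

Local Notation f := (derive1 F).
Local Notation f' := (derive1 (derive1 F)).

Lemma tail_regular_is_derive x : z < x < xF -> is_derive x 1 F (f x).
Proof.
move=> xI; have [dF _] := F_reg.1 x (xI : `]z, xF[%classic x).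
by rewrite derive1E; apply: derivableP.
Qed.

Lemma tail_regular_is_derive2 x : z < x < xF -> is_derive x 1 f (f' x).
Proof.
move=> xI; have [_ df] := F_reg.1 x (xI : `]z, xF[%classic x).
by rewrite [X in is_derive _ _ _ X]derive1E; apply: derivableP.
Qed.

Lemma tail_regular_gt0 x : z < x < xF -> 0 < f x.
Proof. by move=> xI; apply: F_reg.2.1; rewrite /= in_itv. Qed.

Section NearEndpoint.
Hypothesis z_lt_xF : z < xF.
Hypothesis F_lt1 : forall x, x < xF -> F x < 1.
Hypothesis F_sup : forall e, 0 < e -> exists2 s, s < xF & 1 - e < F s.
Hypothesis F_nondecr : forall x y, x <= y -> F x <= F y.

Lemma hazard_inv_lower_bound (e d x t : R) : xF - d < x -> z < x -> x <= t < xF ->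
  (forall y, xF - d < y < xF -> `|(1 - F y) * f' y / f y ^+ 2 + 1| < e) ->
  hazard_inv F f x - e * (t - x) <= hazard_inv F f t.
Proof.
move=> dx zx /andP[xt txF] A3.
have yI y : x <= y <= t -> z < y < xF.
  by case/andP=> xy yt; rewrite (lt_le_trans zx xy) (le_lt_trans yt txF).
apply: MVT_lower_bound xt _ _ => [y /yI yIn|y xyt].
  apply: is_derive_hazard_inv (tail_regular_is_derive yIn) _ _.
    exact: tail_regular_is_derive2.
  by rewrite gt_eqF // tail_regular_gt0.
have /A3 : xF - d < y < xF.
  by case/andP: xyt => xy yt; rewrite (lt_le_trans dx xy) (le_lt_trans yt txF).
by rewrite ltr_norml => /andP[]; lra.
Qed.

Lemma survival_expR_nondecr (c x t : R) : 0 < c -> z < x -> x <= t < xF ->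
  (forall y, x <= y <= t -> c <= hazard_inv F f y) ->
  (1 - F x) * expR (x / c) <= (1 - F t) * expR (t / c).
Proof.
move=> c0 zx /andP[xt txF] ca.
have yI y : x <= y <= t -> z < y < xF.
  by case/andP=> xy yt; rewrite (lt_le_trans zx xy) (le_lt_trans yt txF).
have := @MVT_lower_bound _ (fun s => (1 - F s) * expR (c^-1 * s))
  (fun y => expR (c^-1 * y) * ((1 - F y) * c^-1 - f y)) x t 0 xt.
rewrite mul0r subr0 ![_ / c]mulrC; apply=> [y /yI yIn|y xyt].
  exact/is_derive_survival_expR/tail_regular_is_derive.
rewrite oppr0 mulr_ge0 ?expR_ge0 // subr_ge0 ler_pdivlMr //.
by rewrite mulrC -ler_pdivlMr ?tail_regular_gt0 ?yI // ca.
Qed.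

Lemma hazard_inv_not_bounded_below (c x : R) : 0 < c -> z < x < xF ->
  ~ (forall t, x <= t < xF -> c <= hazard_inv F f t).
Proof.
move=> c0 /andP[zx xxF] ca.
have Fx1 : 0 < 1 - F x by rewrite subr_gt0 F_lt1.
pose eta := (1 - F x) * expR (x / c) / expR (xF / c).
have eta0 : 0 < eta by rewrite divr_gt0 ?mulr_gt0 ?expR_gt0.
have [s sxF Fs] := F_sup eta0.
pose t := Num.max s x.
have xt : x <= t < xF by rewrite le_max lexx orbT gt_max sxF xxF.
have ca_t y : x <= y <= t -> c <= hazard_inv F f y.
  case/andP: xt => _ txF /andP[xy yt].
  by apply: ca; rewrite xy (le_lt_trans yt txF).
have psi_xt := survival_expR_nondecr c0 zx xt ca_t.
have Fst : F s <= F t by apply: F_nondecr; rewrite le_max lexx.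
have e_t : expR (t / c) <= expR (xF / c).
  by rewrite ler_expR ler_pM2r ?invr_gt0 //; case/andP: xt => _ /ltW.
have Ft1 : 0 <= 1 - F t by rewrite subr_ge0 ltW // F_lt1 //; case/andP: xt.
have := le_trans psi_xt (ler_wpM2l Ft1 e_t).
rewrite -ler_pdivrMr ?expR_gt0 // -/eta; lra.
Qed.

Hypothesis A3 : (fun x => (1 - F x) * f' x / f x ^+ 2) @ xF^'- --> (-1 : R).

Lemma hazard_inv_littleo (e : R) : 0 < e ->
  exists2 d, 0 < d & forall x, xF - d < x < xF -> hazard_inv F f x <= e * (xF - x).
Proof.
move=> e0.
have [d1 d10 A3d] := cvg_at_left_dist_lt A3 (divr_gt0 e0 (ltr0Sn _ 3)).
have A3e y : xF - d1 < y < xF -> `|(1 - F y) * f' y / f y ^+ 2 + 1| < e / 4.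
  by move=> /A3d; rewrite opprK.
exists (Num.min d1 (xF - z)) => [|x /andP[dx xxF]].
  by rewrite lt_min d10 subr_gt0.
have m1 : Num.min d1 (xF - z) <= d1 by rewrite ge_min lexx.
have m2 : Num.min d1 (xF - z) <= xF - z by rewrite ge_min lexx orbT.
have [d1x zx] : xF - d1 < x /\ z < x by split; lra.
rewrite leNgt; apply/negP => ax.
have ax0 : 0 < hazard_inv F f x by apply: le_lt_trans ax; rewrite mulr_ge0 ?subr_ge0 ?ltW.
apply: (@hazard_inv_not_bounded_below (hazard_inv F f x / 2) x).
- by rewrite divr_gt0.
- by rewrite zx.
move=> t xtI; have := hazard_inv_lower_bound d1x zx xtI A3e.
have : e / 4 * (t - x) <= e / 4 * (xF - x).
  by case/andP: xtI => _ txF; rewrite ler_wpM2l ?divr_ge0 ?ltW //; lra.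
lra.
Qed.

End NearEndpoint.
End RegularTail.

Lemma is_derive_shifted_inv (R : realType) (c y : R) : y != 0 ->
  is_derive y 1 (fun t => c - t^-1) (y^-1 ^+ 2).
Proof.
move=> y0; have dinv := @is_deriveV R id y 1 1 y0 (is_derive_id y 1).
have := is_deriveB (is_derive_cst c y 1) dinv.
move=> /is_derive_eq; apply.
by rewrite /GRing.scale /= expr2 exprVn expr2; ring.
Qed.

Section ReciprocalTransform.
Variables (R : realType) (F H : R -> R) (z xF : R).
Hypothesis z_lt_xF : z < xF.
Hypothesis F_reg : tail_regular `]z, xF[ F.
Hypothesis HE : forall t, 0 < t -> H t = F (xF - t^-1).

Local Notation f := (derive1 F).
Local Notation f' := (derive1 (derive1 F)).

Lemma reciprocal_in_tail t : (xF - z)^-1 < t -> 0 < t /\ z < xF - t^-1 < xF.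
Proof.
move=> zt; have t0 : 0 < t by apply: lt_trans zt; rewrite invr_gt0 subr_gt0.
split => //; rewrite ltrBlDr ltrDl invr_gt0 t0 andbT.
have : t^-1 < xF - z.
  by rewrite -[xF - z]invrK ltf_pV2 ?posrE // invr_gt0 subr_gt0.
lra.
Qed.

Lemma is_derive_transform y : (xF - z)^-1 < y ->
  is_derive y 1 H (f (xF - y^-1) * y^-1 ^+ 2).
Proof.
move=> zy; have [y0 yI] := reciprocal_in_tail zy.
apply: (@near_eq_is_derive _ _ _ (F \o (fun t => xF - t^-1))).
  by near=> t; rewrite /= HE //; near: t; exact: lt_nbhsr.
apply: is_derive1_comp; first by have := tail_regular_is_derive F_reg yI.
by apply: is_derive_shifted_inv; rewrite gt_eqF.
Unshelve. all: by end_near.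
Qed.

Lemma derive1_transform y : (xF - z)^-1 < y ->
  derive1 H y = f (xF - y^-1) * y^-1 ^+ 2.
Proof. by move=> /is_derive_transform dH; rewrite derive1E derive_val. Qed.

Lemma is_derive2_transform y : (xF - z)^-1 < y ->
  is_derive y 1 (derive1 H)
    (f' (xF - y^-1) * y^-1 ^+ 4 - 2 * f (xF - y^-1) * y^-1 ^+ 3).
Proof.
move=> zy; have [y0 yI] := reciprocal_in_tail zy.
have y_neq0 : y != 0 by rewrite gt_eqF.
have dfg : is_derive y 1 (f \o (fun t => xF - t^-1)) (f' (xF - y^-1) * y^-1 ^+ 2).
  apply: is_derive1_comp; first by have := tail_regular_is_derive2 F_reg yI.
  exact: is_derive_shifted_inv.
have dinv := @is_deriveV R id y 1 1 y_neq0 (is_derive_id y 1).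
have := is_deriveM dfg (is_deriveX 2 dinv).
rewrite (_ : (fun t : R => (id t)^-1) ^+ 2 = (fun t => t^-1 ^+ 2)); last first.
  by apply/funext => t; rewrite exprfctE.
move=> /is_derive_eq dH.
apply: (near_eq_is_derive _ (dH _ _)); last by rewrite /GRing.scale /= !exprVn; field.
by near=> t; rewrite /= derive1_transform //; near: t; exact: lt_nbhsr.
Unshelve. all: by end_near.
Qed.

Lemma derive2_transform y : (xF - z)^-1 < y ->
  derive1 (derive1 H) y
    = f' (xF - y^-1) * y^-1 ^+ 4 - 2 * f (xF - y^-1) * y^-1 ^+ 3.
Proof. by move=> /is_derive2_transform dH; rewrite derive1E derive_val. Qed.

Lemma tail_regular_transform : tail_regular `](xF - z)^-1, +oo[ H.
Proof.
set I := `](xF - z)^-1, +oo[%classic.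
have Ipt t : I t -> 0 < t /\ z < xF - t^-1 < xF.
  by rewrite /I /= in_itv /= andbT; exact: reciprocal_in_tail.
have Jpt t : z < t < xF -> `]z, xF[%classic t by rewrite /= in_itv.
have [_ [f_gt0 [f_decr f_conv]]] := F_reg.
pose g t := xF - t^-1; pose q (t : R) := t^-1 ^+ 2.
have iI : is_interval I by apply: interval_is_interval.
have IJ t : I t -> `]z, xF[%classic (g t) by move=> /Ipt[_ /Jpt].
have q_ge0 t : I t -> 0 <= q t by move=> _; exact: sqr_ge0.
have fg_ge0 t : I t -> 0 <= (f \o g) t by move=> /IJ /f_gt0 /ltW.
have q_decr : decreasing_on I q.
  by move=> x y /Ipt[x0 _] _ xy; exact: inv_sqr_le.
have fg_decr : decreasing_on I (f \o g).
  apply: decreasing_on_comp IJ _ f_decr => x y /Ipt[x0 _] /Ipt[y0 _] xy.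
  by rewrite lerD2l lerN2 lef_pV2 ?posrE.
have q_conv : convex_on I q.
  by move=> x y t /Ipt[x0 _] /Ipt[y0 _]; exact: inv_sqr_convex.
have fg_conv : convex_on I (f \o g).
  apply: convex_on_comp _ IJ _ _ f_decr f_conv; first exact: interval_is_interval.
    move=> x y t /Ipt[x0 _] /Ipt[y0 _] t01.
    have := inv_convex x0 y0 t01; rewrite /g; lra.
  by move=> x y t Ix Iy; apply: is_interval_conv.
have dHE t : I t -> derive1 H t = ((f \o g) \* q) t.
  by rewrite /I /= in_itv /= andbT => /derive1_transform ->.
split; [|split; [|split]].
- by move=> t; rewrite /I /= in_itv /= andbT => zt; split;
    [have [] := is_derive_transform zt | have [] := is_derive2_transform zt].
- move=> t It; have [t0 _] := Ipt t It; rewrite dHE //.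
  by apply: mulr_gt0; [exact: f_gt0 (IJ _ It) | rewrite exprn_gt0 ?invr_gt0].
- move=> x y Ix Iy xy; rewrite !dHE //.
  exact: (decreasing_on_mul fg_ge0 q_ge0 fg_decr q_decr).
- move=> x y t Ix Iy t01; rewrite !dHE //; last exact: is_interval_conv.
  exact: (convex_on_mul iI fg_ge0 q_ge0 fg_decr q_decr fg_conv q_conv).
Qed.

Lemma transform_ratioE y : (xF - z)^-1 < y ->
  (1 - H y) * derive1 (derive1 H) y / derive1 H y ^+ 2
  = (1 - F (xF - y^-1)) * f' (xF - y^-1) / f (xF - y^-1) ^+ 2
    - 2 * hazard_inv F f (xF - y^-1) * y.
Proof.
move=> zy; have [y0 yI] := reciprocal_in_tail zy.
have fx0 := tail_regular_gt0 F_reg yI.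
rewrite derive1_transform // derive2_transform // HE // /hazard_inv.
by field; rewrite !gt_eqF.
Qed.

Hypothesis F_lt1 : forall x, x < xF -> F x < 1.
Hypothesis F_sup : forall e, 0 < e -> exists2 s, s < xF & 1 - e < F s.
Hypothesis F_nondecr : forall x y, x <= y -> F x <= F y.
Hypothesis A3 : (fun x => (1 - F x) * f' x / f x ^+ 2) @ xF^'- --> (-1 : R).

Lemma transform_von_mises :
  (fun y => (1 - H y) * derive1 (derive1 H) y / derive1 H y ^+ 2) @ +oo --> (-1 : R).
Proof.
apply: cvg_pinfty_dist_lt => e e0.
have [d1 d10 A3d] := cvg_at_left_dist_lt A3 (divr_gt0 e0 (ltr0Sn _ 1)).
have [d2 d20 a_small] := hazard_inv_littleo F_reg z_lt_xF F_lt1 F_sup F_nondecr A3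
  (divr_gt0 e0 (ltr0Sn _ 3)).
exists (Num.max ((xF - z)^-1) (Num.max d1^-1 d2^-1)) => y.
rewrite !gt_max => /andP[zy /andP[d1y d2y]].
have [y0 yI] := reciprocal_in_tail zy.
have near_xF d : 0 < d -> d^-1 < y -> xF - d < xF - y^-1 < xF.
  move=> d0 dy; have : y^-1 < d by rewrite -[d]invrK ltf_pV2 ?posrE ?invr_gt0.
  by case/andP: yI => _ ->; rewrite andbT; lra.
rewrite transform_ratioE //.
move: (A3d _ (near_xF _ d10 d1y)) (a_small _ (near_xF _ d20 d2y)).
have -> : xF - (xF - y^-1) = y^-1 by ring.
set a := hazard_inv F f _; set r := _ / _ ^+ 2.
have a0 : 0 <= a.
  rewrite divr_ge0 ?subr_ge0 ?ltW ?F_lt1 ?(tail_regular_gt0 F_reg yI) //.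
  by case/andP: yI.
move=> r_near a_le; have : a * y <= e / 4 by rewrite -ler_pdivlMr.
have := mulr_ge0 a0 (ltW y0).
move: r_near; rewrite opprK !ltr_norml => /andP[]; lra.
Qed.

End ReciprocalTransform.

Lemma Gumbel_gt0 (R : realType) (x : R) : 0 < Gumbel x.
Proof. exact: expR_gt0. Qed.

Lemma Gumbel_lt1 (R : realType) (x : R) : Gumbel x < 1.
Proof. by rewrite /Gumbel expR_lt1 oppr_lt0 expR_gt0. Qed.

Lemma continuous_Gumbel (R : realType) : continuous (@Gumbel R).
Proof.
move=> x; apply: continuous_comp; last exact: continuous_expR.
apply: continuousN; apply: continuous_comp; last exact: continuous_expR.
exact: continuousN.
Qed.

Lemma affine_reciprocal_argE (R : realType) (u C x : R) : 0 < u ->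
  C / u ^+ 2 * x + u^-1 = (1 + C / u * x) / u.
Proof. by move=> u0; field; rewrite gt_eqF. Qed.

Lemma affine_reciprocalE (R : realType) (xF u C x : R) : 0 < u -> 0 < C ->
  0 < 1 + C / u * x ->
  xF - (C / u ^+ 2 * x + u^-1)^-1 = (xF - u) + C * (x / (1 + C / u * x)).
Proof.
move=> u0 C0 w0; rewrite affine_reciprocal_argE //.
field; have -> : u + C * x = u * (1 + C / u * x) by field; rewrite gt_eqF.
by rewrite !gt_eqF ?mulr_gt0.
Qed.

Lemma frac_affine_bounds (R : realType) (x r d : R) : 0 <= r ->
  2 * r * `|x| < 1 -> 2 * r * x ^+ 2 <= d ->
  [/\ 0 < 1 + r * x, x - d <= x / (1 + r * x) & x / (1 + r * x) <= x].
Proof.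
move=> r0 rx rx2.
have rx_ge : - (r * `|x|) <= r * x by rewrite -mulrN ler_wpM2l // lerNnormlW.
have w0 : 1 / 2 < 1 + r * x by lra.
have wpos : 0 < 1 + r * x by lra.
have qE : x - x / (1 + r * x) = r * x ^+ 2 / (1 + r * x) by field; rewrite gt_eqF.
have q_ge0 : 0 <= r * x ^+ 2 / (1 + r * x).
  by apply: divr_ge0; [exact: mulr_ge0 r0 (sqr_ge0 x) | exact: ltW].
have q_le : r * x ^+ 2 / (1 + r * x) <= 2 * r * x ^+ 2.
  rewrite ler_pdivrMr //; have := mulr_ge0 r0 (sqr_ge0 x); nra.
by split => //; lra.
Qed.

Lemma MDA_Gumbel_endpoint_set_neq0 (R : realType) (F : R -> R) :
  MDA_Gumbel F -> endpoint_set F !=set0.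
Proof.
move=> [c [d [_ cd]]].
have G1 : 0 < 1 - Gumbel (0 : R) by rewrite subr_gt0 Gumbel_lt1.
have /cvgn_distP/(_ _ G1)[N /(_ N (leqnn N))] := cd 0.
set y := c N * 0 + d N => FN; exists y; rewrite /endpoint_set /= ltNge.
apply/negP => /(exprn_ege1 N) F1.
by move: FN; rewrite ltr_norml => /andP[_]; lra.
Qed.

Section MDAGumbel.
Variables (R : realType) (F : R -> R) (xF : R) (c d : nat -> R).
Hypothesis F_ge0 : forall x, 0 <= F x.
Hypothesis F_nondecr : forall x y, x <= y -> F x <= F y.
Hypothesis F_eq1 : forall x, xF <= x -> F x = 1.
Hypothesis c_gt0 : forall n, 0 < c n.
Hypothesis cd_cvg : forall x, (fun n => F (c n * x + d n) ^+ n) @ \oo --> Gumbel x.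

Lemma MDA_norming_lt_endpoint x :
  exists N, forall n, (N <= n)%N -> c n * x + d n < xF.
Proof.
have G1 : 0 < 1 - Gumbel x by rewrite subr_gt0 Gumbel_lt1.
have /cvgn_distP/(_ _ G1)[N FN] := @cd_cvg x.
exists N => n Nn; rewrite ltNge; apply/negP => /F_eq1 F1.
by have := FN n Nn; rewrite F1 expr1n ger0_norm ?ltxx // ltW.
Qed.

Lemma MDA_scale_small e : 0 < e -> exists N, forall n, (N <= n)%N ->
  0 < xF - d n /\ c n < e * (xF - d n).
Proof.
move=> e0.
have [N0 lt0] := MDA_norming_lt_endpoint 0.
have [N1 lt1] := MDA_norming_lt_endpoint e^-1.
exists (maxn N0 N1) => n; rewrite geq_max => /andP[/lt0 h0 /lt1 h1].
rewrite mulr0 add0r in h0; split; first by rewrite subr_gt0.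
by rewrite mulrC -ltr_pdivrMr // -[e]invrK; lra.
Qed.

Lemma MDA_Gumbel_sup_endpoint e : 0 < e -> exists2 s, s < xF & 1 - e < F s.
Proof.
move=> e0; apply: contrapT => no_s.
have Fle s : s < xF -> F s <= 1 - e.
  by move=> sxF; rewrite leNgt; apply/negP => Fs; apply: no_s; exists s.
have G2 : 0 < Gumbel (0 : R) / 2 by rewrite divr_gt0 ?Gumbel_gt0.
have [N0 lt0] := MDA_norming_lt_endpoint 0.
have /cvgn_distP/(_ _ G2)[N1 near0] := @cd_cvg 0.
have e1 : 0 <= 1 - e by apply: le_trans (Fle _ (lt0 _ (leqnn N0))).
have /cvgn_distP/(_ _ G2)[N2 geo] : (1 - e) ^+ n @[n --> \oo] --> 0.
  by apply: cvg_expr; rewrite ger0_norm //; lra.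
pose n := maxn N0 (maxn N1 N2).
have [n0 n1 n2] : [/\ (N0 <= n)%N, (N1 <= n)%N & (N2 <= n)%N].
  by rewrite !leq_max !leqnn !orbT.
have /Fle Fn : d n < xF by have := lt0 n n0; rewrite mulr0 add0r.
have := near0 n n1; rewrite mulr0 add0r ltr_norml => /andP[Fn_lo _].
have := geo n n2; rewrite subr0 ger0_norm ?exprn_ge0 // => geo_n.
have : F (d n) ^+ n <= (1 - e) ^+ n by rewrite lerXn2r ?nnegrE.
lra.
Qed.

Lemma MDA_Gumbel_local_uniform x e : 0 < e ->
  exists2 δ, 0 < δ & exists N, forall n q, (N <= n)%N -> x - δ <= q <= x ->
    `|F (d n + c n * q) ^+ n - Gumbel x| < e.
Proof.
move=> e0; have e2 : 0 < e / 2 by rewrite divr_gt0.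
have Gx : {for x, continuous (@Gumbel R)} by exact: continuous_Gumbel.
have /cvgrPdist_lt/(_ _ e2)/nbhs_ballP[δ /= δ0 Gδ] := Gx.
have Gl : `|Gumbel (x - δ / 2) - Gumbel x| < e / 2.
  rewrite distrC; apply: Gδ; rewrite /ball /= opprB addrC subrK.
  by rewrite gtr0_norm ?divr_gt0 // ltr_pdivrMr // ltr_pMr //; lra.
exists (δ / 2); first by rewrite divr_gt0.
have /cvgn_distP/(_ _ e2)[N1 lo] := @cd_cvg (x - δ / 2).
have /cvgn_distP/(_ _ e2)[N2 hi] := @cd_cvg x.
exists (maxn N1 N2) => n q; rewrite geq_max => /andP[/lo {}lo /hi {}hi] /andP[xq qx].
have mono a b : a <= b -> F (c n * a + d n) ^+ n <= F (c n * b + d n) ^+ n.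
  move=> ab; apply: lerXn2r; rewrite ?nnegrE //; apply: F_nondecr.
  by rewrite lerD2r ler_wpM2l // ltW.
have := mono _ _ xq; have := mono _ _ qx; rewrite addrC.
move: lo hi Gl; rewrite !ltr_norml => /andP[? ?] /andP[? ?] /andP[? ?].
lra.
Qed.

Lemma MDA_Gumbel_reciprocal (H : R -> R) :
  (forall t, 0 < t -> H t = F (xF - t^-1)) -> MDA_Gumbel H.
Proof.
move=> HE; pose u n := xF - d n.
(* [u n > 0] for large [n] (MDA_scale_small); the other values are irrelevant. *)
exists (fun n => if 0 < u n then c n / u n ^+ 2 else 1),
       (fun n => if 0 < u n then (u n)^-1 else 0); split.
  by move=> n; case: ifP => // u0; rewrite divr_gt0 ?exprn_gt0.
move=> x; apply/cvgn_distP => e e0.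
have [δ δ0 [N1 unif]] := MDA_Gumbel_local_uniform x e0.
have x1 : 0 < 2 * (`|x| + 1) by rewrite mulr_gt0 // ltr_pwDr.
have x2 : 0 < 2 * (x ^+ 2 + 1) by rewrite mulr_gt0 // ltr_pwDr // sqr_ge0.
pose η := Num.min (2 * (`|x| + 1))^-1 (δ / (2 * (x ^+ 2 + 1))).
have η0 : 0 < η by rewrite lt_min invr_gt0 x1 divr_gt0.
have [N2 small] := MDA_scale_small η0.
exists (maxn N1 N2) => n; rewrite geq_max => /andP[/unif {}unif /small[u0 cu]].
rewrite -/(u n) in u0 cu *; rewrite u0.
set r := c n / u n.
have r0 : 0 <= r by rewrite divr_ge0 // ltW.
have rη : r < η by rewrite ltr_pdivrMr.
have rx : 2 * r * `|x| < 1.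
  have : r < (2 * (`|x| + 1))^-1 by apply: lt_le_trans rη _; rewrite ge_min lexx.
  by rewrite -(ltr_pM2r x1) mulVf ?gt_eqF //; lra.
have rx2 : 2 * r * x ^+ 2 <= δ.
  have : r < δ / (2 * (x ^+ 2 + 1)).
    by apply: lt_le_trans rη _; rewrite ge_min lexx orbT.
  by rewrite -(ltr_pM2r x2) divfK ?gt_eqF //; lra.
have [w0 q_lo q_hi] := frac_affine_bounds r0 rx rx2.
rewrite HE; last by rewrite affine_reciprocal_argE // divr_gt0.
rewrite affine_reciprocalE ?c_gt0 // (_ : xF - u n = d n); last by rewrite /u; ring.
by apply: unif => //; rewrite q_lo q_hi.
Qed.

End MDAGumbel.

Section RightEndpoint.
Variables (R : realType) (F : R -> R) (xF : R).
Hypothesis F_nondecr : forall x y, x <= y -> F x <= F y.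
Hypothesis F_le1 : forall x, F x <= 1.
Hypothesis F_ub : has_ubound (endpoint_set F).
Hypothesis F_ne : endpoint_set F !=set0.
Hypothesis xFE : xF = sup (endpoint_set F).

Lemma endpoint_lt1 x : x < xF -> F x < 1.
Proof.
rewrite xFE => /(sup_gt F_ne)[s Fs xs].
exact: le_lt_trans (F_nondecr (ltW xs)) Fs.
Qed.

Lemma endpoint_eq1 : F t @[t --> xF^'+] --> F xF -> forall x, xF <= x -> F x = 1.
Proof.
have gt_eq1 y : xF < y -> F y = 1.
  move=> xFy; apply/eqP; rewrite eq_le F_le1 leNgt; apply/negP => Fy.
  have : y <= xF by rewrite xFE; apply: sup_upper_bound.
  by rewrite leNgt xFy.
move=> F_rc x; rewrite le_eqVlt => /predU1P[<-|]; last exact: gt_eq1.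
have F1 : F t @[t --> xF^'+] --> (1 : R).
  by apply: cvg_near_cst; near=> t; apply: gt_eq1; near: t; exact: nbhs_right_gt.
exact: cvg_unique F_rc F1.
Unshelve. all: by end_near.
Qed.

End RightEndpoint.

Lemma reciprocal_endpoint_unbounded (R : realType) (F H : R -> R) (xF : R) :
  (forall t, 0 < t -> H t = F (xF - t^-1)) -> (forall x, x < xF -> F x < 1) ->
  ~ has_ubound (endpoint_set H).
Proof.
move=> HE F_lt1 [M HM]; pose y := Num.max 1 (M + 1).
have y0 : 0 < y by rewrite lt_max ltr01.
have : endpoint_set H y.
  by rewrite /endpoint_set /= HE // F_lt1 // ltrBlDr ltrDl invr_gt0.
by move=> /HM; rewrite ge_max => /andP[_]; lra.
Qed.

Section DistributionFunction.
Context d (T : measurableType d) (R : realType) (P : probability T R).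
Implicit Types X Y : {RV P >-> R}.

Lemma distFE X x : (distF X x)%:E = P (X @^-1` `]-oo, x]).
Proof. by rewrite /distF fineK // fin_num_measure. Qed.

Lemma distF_ge0 X x : 0 <= distF X x.
Proof. by rewrite -lee_fin distFE. Qed.

Lemma distF_le1 X x : distF X x <= 1.
Proof. by rewrite -lee_fin distFE; apply: probability_le1; apply: measurable_funPTI. Qed.

Lemma distF_nondecr X x y : x <= y -> distF X x <= distF X y.
Proof. by move=> xy; rewrite -lee_fin !distFE; apply: cdf_nondecreasing. Qed.

Lemma distF_right_continuous X a : distF X t @[t --> a^'+] --> distF X a.
Proof.
by apply: fine_cvg; rewrite fineK ?fin_num_measure //; exact: cdf_right_continuous.
Qed.

Lemma distF_add_prob_ge_le1 X s a : s < a ->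
  distF X s + fine (P (X @^-1` `[a, +oo[)) <= 1.
Proof.
move=> sa; rewrite -lee_fin EFinD distFE fineK ?fin_num_measure //; last first.
  exact: measurable_funPTI.
rewrite -measureU //; [| exact: measurable_funPTI | exact: measurable_funPTI |].
  by apply: probability_le1; apply: measurableU; apply: measurable_funPTI.
rewrite -preimage_setI; apply/seteqP; split => w //=.
by rewrite !in_itv /= andbT => -[ws aw]; lra.
Qed.

Lemma prob_ge_endpoint0 X a :
  (forall e, 0 < e -> exists2 s, s < a & 1 - e < distF X s) ->
  P (X @^-1` `[a, +oo[) = 0.
Proof.
move=> F_sup; have Pfin : P (X @^-1` `[a, +oo[) \is a fin_num.
  by apply: fin_num_measure; apply: measurable_funPTI.
rewrite -(fineK Pfin); congr (_%:E); apply/eqP; rewrite eq_le fine_ge0 ?andbT //.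
rewrite leNgt; apply/negP => /F_sup[s sa Fs].
by have := distF_add_prob_ge_le1 X sa; lra.
Qed.

Lemma distF_reciprocal X Y a : (forall w, Y w = (a - X w)^-1) ->
  P (X @^-1` `[a, +oo[) = 0 ->
  forall y, 0 < y -> distF Y y = distF X (a - y^-1).
Proof.
move=> YE Pa0 y y0; apply: EFin_inj; rewrite !distFE.
have y'0 : 0 < y^-1 by rewrite invr_gt0.
have -> : Y @^-1` `]-oo, y] = X @^-1` `]-oo, a - y^-1] `|` X @^-1` `[a, +oo[.
  apply/seteqP; split => w /=; rewrite !in_itv /= YE ?andbT.
    move=> Yy; have [Xa|] := ltP (X w) a; [left | by right].
    have u0 : 0 < a - X w by rewrite subr_gt0.
    by move: Yy; rewrite -[y]invrK lef_pV2 ?posrE // => ?; lra.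
  case=> Xw.
    have u0 : 0 < a - X w by lra.
    by rewrite -[y]invrK lef_pV2 ?posrE //; lra.
  by apply: le_trans (ltW y0); rewrite invr_le0; lra.
rewrite measureU //; [| exact: measurable_funPTI | exact: measurable_funPTI |].
  by rewrite [X in _ + X]Pa0 adde0.
rewrite -preimage_setI; apply/seteqP; split => w //=.
by rewrite !in_itv /= andbT => -[]; lra.
Qed.

End DistributionFunction.

Unset Implicit Arguments.

Theorem proposition3 (d : measure_display) (T : measurableType d) (R : realType)
  (P : probability T R) (X Y : {RV P >-> R}) (xF : R) :
  has_density X ->
  has_ubound (endpoint_set (distF X)) ->
  xF = sup (endpoint_set (distF X)) ->
  (exists z, z < xF /\ tail_regular `]z, xF[ (distF X)) ->
  MDA_Gumbel (distF X) ->
  (fun x => (1 - distF X x) * derive1 (derive1 (distF X)) x / (derive1 (distF X) x) ^+ 2)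
    @ xF^'- --> (-1 : R) ->
  (forall w, Y w = (xF - X w)^-1) ->
  (exists zY : R, tail_regular `]zY, +oo[ (distF Y)) /\
  MDA_Gumbel (distF Y) /\
  ~ has_ubound (endpoint_set (distF Y)) /\
  (fun y => (1 - distF Y y) * derive1 (derive1 (distF Y)) y / (derive1 (distF Y) y) ^+ 2)
    @ +oo --> (-1 : R).
Proof.
move=> _ F_ub xFE [z [z_lt_xF F_reg]] F_MDA A3 YE.
have F_nondecr := @distF_nondecr _ _ _ P X.
have F_ne := MDA_Gumbel_endpoint_set_neq0 F_MDA.
have F_lt1 := endpoint_lt1 F_nondecr F_ne xFE.
have F_eq1 := endpoint_eq1 (distF_le1 X) F_ub F_ne xFE (@distF_right_continuous _ _ _ _ X xF).
have [c [dn [c_gt0 cd_cvg]]] := F_MDA.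
have F_sup := MDA_Gumbel_sup_endpoint (distF_ge0 X) F_eq1 cd_cvg.
have HE := distF_reciprocal YE (prob_ge_endpoint0 F_sup).
split; first by exists (xF - z)^-1; apply: (tail_regular_transform z_lt_xF F_reg HE).
split; first exact: MDA_Gumbel_reciprocal (distF_ge0 X) F_nondecr F_eq1 c_gt0 cd_cvg _ HE.
split; first exact: reciprocal_endpoint_unbounded HE F_lt1.
exact: transform_von_mises z_lt_xF F_reg HE F_lt1 F_sup F_nondecr A3.
Qed.
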